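(* Let $p,q>0$ and $\alpha,\beta,\nu,\gamma\in\mathbb{R}$. Let $f:\mathbb{N}\to[0,\infty)$ be a function with $f(0)=0$, and let $\{|n\rangle\}_{n\in\mathbb{N}}$ be an orthonormal basis of a Hilbert space. Define operators $a,a^{\dagger},N,K$ on the span of this basis by $$a|n\rangle=\sqrt{f(n)}\,|n-1\rangle,\quad a^{\dagger}|n\rangle=\sqrt{f(n+1)}\,|n+1\rangle,\quad N|n\rangle=n|n\rangle,\quad K|n\rangle=(-1)^n|n\rangle$$ (with $a|0\rangle=0$), and let $q^{\alpha N+\beta}$ act by $q^{\alpha N+\beta}|n\rangle=q^{\alpha n+\beta}|n\rangle$. Suppose that these operators satisfy $$aa^{\dagger}-p^{\nu}a^{\dagger}a=(1+2\gamma K)\,q^{\alpha N+\beta}$$ on every basis vector $|n\rangle$. Then for all $n\in\mathbb{N}$, $$f(n)=\begin{cases} q^{\beta}\left(\dfrac{p^{n\nu}-q^{n\alpha}}{p^{\nu}-q^{\alpha}}+2\gamma\,\dfrac{p^{n\nu}-(-1)^{n}q^{n\alpha}}{p^{\nu}+q^{\alpha}}\right), & \text{if } p^{\nu}\neq q^{\alpha},\\[2ex] \left(n+2\gamma\,\dfrac{1-(-1)^{n}}{2}\right)q^{(n-1)\alpha+\beta}, & \text{if } p^{\nu}=q^{\alpha}.\end{cases}$$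
   Context: This is the Fock realization of the $(p,q;\alpha,\beta,\nu;\gamma)$-deformed oscillator algebra, generated by $a,a^{\dagger},N,K$ subject to $aa^{\dagger}-p^{\nu}a^{\dagger}a=(1+2\gamma K)q^{\alpha N+\beta}$, $[N,a]=-a$, $[N,a^{\dagger}]=a^{\dagger}$, $Ka=-aK$, $Ka^{\dagger}=-a^{\dagger}K$, $[N,K]=0$, $N^\dagger=N$, $K^\dagger=K$; the function $f$ is called the structure function of the deformation. Here $\mathbb{N}=\{0,1,2,\dots\}$. *)

From Stdlib Require Import Reals Lra.
Open Scope R_scope.

(* Vectors in the span of the orthonormal basis {|n>} are represented by
   their coordinate functions nat -> R (coordinate m = <m|v>). *)
Definition vec := nat -> R.

Definition ket (n : nat) : vec := fun m => if Nat.eqb m n then 1 else 0.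

(* a |n> = sqrt(f n) |n-1>,  a|0> = 0 *)
Definition ann (f : nat -> R) (v : vec) : vec := fun m => sqrt (f (S m)) * v (S m).

(* a^dagger |n> = sqrt(f (n+1)) |n+1> *)
Definition cre (f : nat -> R) (v : vec) : vec :=
  fun m => match m with O => 0 | S k => sqrt (f m) * v k end.

Definition numop (v : vec) : vec := fun m => INR m * v m.

Definition parity (v : vec) : vec := fun m => (-1) ^ m * v m.

Definition qpow (q alpha beta : R) (v : vec) : vec :=
  fun m => Rpower q (alpha * INR m + beta) * v m.

Definition one_plus_2gK (gamma : R) (v : vec) : vec :=
  fun m => v m + 2 * gamma * parity v m.

(* Evaluating the defining relation at the coordinate [n] of [|n>] gives the
   first-order recurrence f(n+1) = P f(n) + (1 + 2 gamma (-1)^n) Q^n q^beta with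
   P = p^nu, Q = q^alpha and f(0) = 0 (the square roots recombine since f >= 0). *)
From Stdlib Require Import Reals Lra.
Open Scope R_scope.

Lemma Rpower_mult_INR (x y : R) (n : nat) :
  0 < x -> Rpower x (INR n * y) = Rpower x y ^ n.
Proof.
  intro Hx. rewrite Rmult_comm, <- Rpower_mult. apply Rpower_pow, exp_pos.
Qed.

Lemma ann_cre_ket_diag (f : nat -> R) (n : nat) :
  0 <= f (S n) -> ann f (cre f (ket n)) n = f (S n).
Proof.
  intro Hf. unfold ann, cre, ket. rewrite Nat.eqb_refl, Rmult_1_r.
  exact (sqrt_sqrt _ Hf).
Qed.

Lemma cre_ann_ket_diag (f : nat -> R) (n : nat) :
  f 0%nat = 0 -> 0 <= f n -> cre f (ann f (ket n)) n = f n.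
Proof.
  intros f0 Hf. unfold ann, cre, ket. destruct n as [|k].
  - symmetry. exact f0.
  - rewrite Nat.eqb_refl, Rmult_1_r. exact (sqrt_sqrt _ Hf).
Qed.

Lemma one_plus_2gK_qpow_ket_diag (gamma q alpha beta : R) (n : nat) :
  0 < q ->
  one_plus_2gK gamma (qpow q alpha beta (ket n)) n
  = (1 + 2 * gamma * (-1) ^ n) * Rpower q alpha ^ n * Rpower q beta.
Proof.
  intro Hq. unfold one_plus_2gK, parity, qpow, ket. rewrite Nat.eqb_refl.
  rewrite Rpower_plus, (Rmult_comm alpha), Rpower_mult_INR by exact Hq. ring.
Qed.

Section StructureFunctionRecurrence.

Variables (P Q B gamma : R) (u : nat -> R).
Hypothesis u0 : u 0%nat = 0.
Hypothesis uS : forall n, u (S n) = P * u n + (1 + 2 * gamma * (-1) ^ n) * Q ^ n * B.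

Lemma recurrence_solution_generic (n : nat) :
  P - Q <> 0 -> P + Q <> 0 ->
  u n = B * ((P ^ n - Q ^ n) / (P - Q)
             + 2 * gamma * (P ^ n - (-1) ^ n * Q ^ n) / (P + Q)).
Proof.
  intros HPQ HPQ'. induction n as [|n IH].
  - rewrite u0. simpl. field. split; assumption.
  - rewrite uS, IH. simpl. field. split; assumption.
Qed.

Lemma recurrence_solution_resonant (n : nat) :
  P = Q -> u (S n) = (INR (S n) + 2 * gamma * ((1 - (-1) ^ S n) / 2)) * Q ^ n * B.
Proof.
  intro HPQ. subst P. induction n as [|n IH].
  - rewrite uS, u0. simpl. field.
  - rewrite uS, IH, !S_INR. simpl. field.
Qed.

End StructureFunctionRecurrence.

Theorem proposition1 (p q alpha beta nu gamma : R) (f : nat -> R) :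
  0 < p -> 0 < q ->
  (forall n, 0 <= f n) -> f 0%nat = 0 ->
  (forall n m,
     ann f (cre f (ket n)) m - Rpower p nu * cre f (ann f (ket n)) m
     = one_plus_2gK gamma (qpow q alpha beta (ket n)) m) ->
  forall n : nat,
    (Rpower p nu <> Rpower q alpha ->
     f n = Rpower q beta *
       ((Rpower p (INR n * nu) - Rpower q (INR n * alpha)) / (Rpower p nu - Rpower q alpha)
        + 2 * gamma * (Rpower p (INR n * nu) - (-1) ^ n * Rpower q (INR n * alpha))
                    / (Rpower p nu + Rpower q alpha))) /\
    (Rpower p nu = Rpower q alpha ->
     f n = (INR n + 2 * gamma * ((1 - (-1) ^ n) / 2))
           * Rpower q ((INR n - 1) * alpha + beta)).
Proof.
  intros Hp Hq Hf f0 Hrel n.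
  assert (HP : 0 < Rpower p nu) by apply exp_pos.
  assert (HQ : 0 < Rpower q alpha) by apply exp_pos.
  assert (fS : forall k, f (S k) = Rpower p nu * f k
             + (1 + 2 * gamma * (-1) ^ k) * Rpower q alpha ^ k * Rpower q beta).
  { intro k. specialize (Hrel k k).
    rewrite ann_cre_ket_diag, cre_ann_ket_diag, one_plus_2gK_qpow_ket_diag in Hrel
      by auto.
    lra. }
  split.
  - intro Hne. rewrite !Rpower_mult_INR by assumption.
    apply recurrence_solution_generic; auto; lra.
  - intro Heq. destruct n as [|k].
    + rewrite f0. simpl. lra.
    + replace ((INR (S k) - 1) * alpha + beta) with (INR k * alpha + beta)
        by (rewrite S_INR; ring).
      rewrite Rpower_plus, Rpower_mult_INR by exact Hq.
      rewrite (recurrence_solution_resonant _ _ _ _ _ f0 fS k Heq). ring.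
Qed.
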